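(* Let $\mathcal I,\mathcal X$ be non-empty sets and let $(\mathcal I,\langle\cdot\rangle_x)_{x\in\mathcal X}$ be a family of partial magmas satisfying the bi-injectivity property: for all $a,a',b\in\mathcal I$ and $x,x'\in\mathcal X$, $\langle a'b\rangle_{x'}=\langle ab\rangle_x$ implies $x'=x$ and $a'=a$. Then every map $S:\mathcal X\times\mathcal X\to\mathcal X\times\mathcal X$, $S(x,y)=(u,v)$, satisfying the associativity condition $\langle a\langle bc\rangle_y\rangle_x=\langle\langle ab\rangle_u c\rangle_v$ for all $x,y\in\mathcal X$ (with $(u,v)=S(x,y)$) and all $a,b,c\in\mathcal I$, is a pentagon map.
   Context: A partial magma $(\mathcal I,\langle\cdot\rangle)$ is a non-empty set $\mathcal I$ with a binary operation $\langle\cdot\rangle:D\to\mathcal I$, $D\subseteq\mathcal I\times\mathcal I$, written $(a,b)\mapsto\langle ab\rangle$. For a set $Y$ and $S:Y\times Y\to Y\times Y$, define on $Y^3$: $S_{12}=S\times\mathrm{id}_Y$, $S_{23}=\mathrm{id}_Y\times S$, $S_{13}(y_1,y_2,y_3)=(p,y_2,q)$ with $(p,q)=S(y_1,y_3)$. $S$ is a pentagon map if $S_{12}\circ S_{13}\circ S_{23}=S_{23}\circ S_{12}$ (rightmost applied first). *)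

(* A family of partial magmas (I, <.>_x)_{x in X} is represented by
   op : X -> I -> I -> option I, where op x a b = Some c means (a,b) is in the
   domain D_x and <ab>_x = c, and op x a b = None means (a,b) is not in D_x. *)

Definition pmul {I X : Type} (op : X -> I -> I -> option I) (x : X)
  (a b : option I) : option I :=
  match a, b with
  | Some a', Some b' => op x a' b'
  | _, _ => None
  end.

Definition defeq {I : Type} (e1 e2 : option I) : Prop :=
  exists r, e1 = Some r /\ e2 = Some r.

Definition S12 {Y : Type} (S : Y * Y -> Y * Y) (t : Y * Y * Y) : Y * Y * Y :=
  let '(y1, y2, y3) := t in let '(p, q) := S (y1, y2) in (p, q, y3).

Definition S23 {Y : Type} (S : Y * Y -> Y * Y) (t : Y * Y * Y) : Y * Y * Y :=
  let '(y1, y2, y3) := t in let '(p, q) := S (y2, y3) in (y1, p, q).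

Definition S13 {Y : Type} (S : Y * Y -> Y * Y) (t : Y * Y * Y) : Y * Y * Y :=
  let '(y1, y2, y3) := t in let '(p, q) := S (y1, y3) in (p, y2, q).

Definition pentagon {Y : Type} (S : Y * Y -> Y * Y) : Prop :=
  forall t : Y * Y * Y, S12 S (S13 S (S23 S t)) = S23 S (S12 S t).

(* Since every associativity equation asserts that both sides are defined, each
   partial magma is in fact total.  Evaluate the right-normed product
   <a<b<cd>_z>_y>_x along both sides of the pentagon equation: applying the
   associativity condition three times on one side and twice on the other
   turns it into a left-normed product <<<ab>_p c>_r d>_s, whose labels
   (p, r, s) are exactly the two sides of the pentagon equation at (x, y, z).
   Bi-injectivity recovers s, then r, then p from the value of such a product. *)


Section TotalMagmas.

Variables (I X : Type) (mul : X -> I -> I -> I) (S : X * X -> X * X).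

Hypothesis mul_assoc : forall (x y u v : X) (a b c : I),
  S (x, y) = (u, v) -> mul x a (mul y b c) = mul v (mul u a b) c.

Hypothesis mul_bi_inj : forall (x x' : X) (a a' b : I),
  mul x' a' b = mul x a b -> x' = x /\ a' = a.

Definition rprod (t : X * X * X) (a b c d : I) : I :=
  let '(x, y, z) := t in mul x a (mul y b (mul z c d)).

Definition lprod (t : X * X * X) (a b c d : I) : I :=
  let '(p, r, s) := t in mul s (mul r (mul p a b) c) d.

Lemma rprod_S23_S12 (t : X * X * X) (a b c d : I) :
  rprod t a b c d = lprod (S23 S (S12 S t)) a b c d.
Proof.
  destruct t as [[x y] z]; unfold S12, S23.
  destruct (S (x, y)) as [p q] eqn:Exy.
  destruct (S (q, z)) as [r s] eqn:Eqz.
  simpl.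
  rewrite (mul_assoc _ _ _ _ _ _ _ Exy).
  exact (mul_assoc _ _ _ _ _ _ _ Eqz).
Qed.

Lemma rprod_S12_S13_S23 (t : X * X * X) (a b c d : I) :
  rprod t a b c d = lprod (S12 S (S13 S (S23 S t))) a b c d.
Proof.
  destruct t as [[x y] z]; unfold S12, S13, S23.
  destruct (S (y, z)) as [u1 v1] eqn:Eyz.
  destruct (S (x, v1)) as [u2 v2] eqn:Exv.
  destruct (S (u2, u1)) as [u3 v3] eqn:Euu.
  simpl.
  rewrite (mul_assoc _ _ _ _ _ _ _ Eyz).
  rewrite (mul_assoc _ _ _ _ _ _ _ Exv).
  rewrite (mul_assoc _ _ _ _ _ _ _ Euu).
  reflexivity.
Qed.

Lemma lprod_inj (t t' : X * X * X) (a b c d : I) :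
  lprod t a b c d = lprod t' a b c d -> t = t'.
Proof.
  destruct t as [[p r] s], t' as [[p' r'] s']; simpl; intros E.
  destruct (mul_bi_inj _ _ _ _ _ E) as [Es Ers]; subst s'.
  destruct (mul_bi_inj _ _ _ _ _ Ers) as [Er Ep]; subst r'.
  destruct (mul_bi_inj _ _ _ _ _ Ep) as [Ep' _]; subst p'.
  reflexivity.
Qed.

Theorem pentagon_of_assoc_bi_inj : inhabited I -> pentagon S.
Proof.
  intros [a] t.
  apply (lprod_inj _ _ a a a a).
  rewrite <- rprod_S12_S13_S23, <- rprod_S23_S12.
  reflexivity.
Qed.

End TotalMagmas.

Section PartialMagmas.

Variables (I X : Type) (op : X -> I -> I -> option I) (S : X * X -> X * X).

Hypothesis op_assoc : forall (x y : X) (a b c : I),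
  defeq (pmul op x (Some a) (op y b c))
        (pmul op (snd (S (x, y))) (op (fst (S (x, y))) a b) (Some c)).

Hypothesis op_bi_inj : forall (a a' b : I) (x x' : X),
  defeq (op x' a' b) (op x a b) -> x' = x /\ a' = a.

(* The [None] branch is never taken, by [op_total]. *)
Definition total_op (x : X) (a b : I) : I :=
  match op x a b with Some c => c | None => a end.

Lemma op_total (x : X) (a b : I) : op x a b = Some (total_op x a b).
Proof.
  unfold total_op.
  destruct (op_assoc x x a a b) as [r [Hl _]].
  simpl in Hl; destruct (op x a b); [reflexivity | discriminate].
Qed.

Lemma total_op_assoc (x y u v : X) (a b c : I) :
  S (x, y) = (u, v) ->
  total_op x a (total_op y b c) = total_op v (total_op u a b) c.
Proof.
  intros Exy.
  destruct (op_assoc x y a b c) as [r [Hl Hr]].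
  rewrite Exy in Hr; simpl in Hr.
  rewrite op_total in Hl, Hr; simpl in Hl, Hr.
  rewrite op_total in Hl, Hr.
  congruence.
Qed.

Lemma total_op_bi_inj (x x' : X) (a a' b : I) :
  total_op x' a' b = total_op x a b -> x' = x /\ a' = a.
Proof.
  intros E.
  apply (op_bi_inj a a' b x x').
  exists (total_op x a b).
  rewrite !op_total, E; split; reflexivity.
Qed.

End PartialMagmas.

Theorem mainTheorem2 (I X : Type) (hI : inhabited I) (hX : inhabited X)
  (op : X -> I -> I -> option I)
  (hbi : forall (a a' b : I) (x x' : X),
      defeq (op x' a' b) (op x a b) -> x' = x /\ a' = a)
  (S : X * X -> X * X)
  (hassoc : forall (x y : X) (a b c : I),
      defeq (pmul op x (Some a) (op y b c))
            (pmul op (snd (S (x, y))) (op (fst (S (x, y))) a b) (Some c))) :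
  pentagon S.
Proof.
  apply (pentagon_of_assoc_bi_inj I X (total_op I X op) S).
  - exact (total_op_assoc I X op S hassoc).
  - exact (total_op_bi_inj I X op S hassoc hbi).
  - exact hI.
Qed.
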